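(* Let $(\mathbf{X},Y,\hat Y)$ be random variables on $\mathcal{X}\times\mathcal{Y}\times\mathcal{Y}$ with $P(\hat Y=i\mid Y=j)=p_{i,j}$ for all $i,j\in\{1,\dots,K\}$ (so $\sum_{i=1}^K p_{i,j}=1$ for each $j$), and assume $\hat Y$ is conditionally independent of $\mathbf{X}$ given $Y$ (i.e. $P(\mathbf{X}\mid Y)=P(\mathbf{X}\mid Y,\hat Y)$), so that $P(\hat Y=i\mid\mathbf{X})=\sum_{j=1}^K p_{i,j}P(Y=j\mid\mathbf{X})$. Let $Q$ be any probability distribution on a hypothesis class $\mathcal{H}$ and let $\hat M$ be a random variable such that, conditionally on $\mathbf{X}=\mathbf{x}$, $\hat M$ is discrete and equals $M_Q(\mathbf{x},i)$ with probability $P(\hat Y=i\mid\mathbf{X}=\mathbf{x})$, $i=1,\dots,K$. Let $\mu^{\hat M}_1=\mathbb{E}[\hat M]$, $\mu^{\hat M}_2=\mathbb{E}[\hat M^2]$, and $\gamma=\sum_{j=1}^K\max_{i\in\{1,\dots,K\}}p_{i,j}$. If $\mu^{\hat M}_1>0$, then $$R(B_{Q_{\mathrm{opt}}})\le 1-\frac{1}{\gamma}\cdot\frac{(\mu^{\hat M}_1)^2}{\mu^{\hat M}_2}.$$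
   Context: $\mathcal{X}\subset\mathbb{R}^d$, $\mathcal{Y}=\{1,\dots,K\}$, $K\ge2$; $\mathcal{H}$ is a class of classifiers $h:\mathcal{X}\to\mathcal{Y}$. For a distribution $Q$ on $\mathcal{H}$: votes $v_Q(\mathbf{x},c)=\mathbb{E}_{h\sim Q}\mathbb{1}[h(\mathbf{x})=c]$, margin $M_Q(\mathbf{x},y)=v_Q(\mathbf{x},y)-\max_{c\ne y}v_Q(\mathbf{x},c)$. $B_{Q_{\mathrm{opt}}}$ denotes the optimal (maximum a posteriori) classifier $B_{Q_{\mathrm{opt}}}(\mathbf{x})=\arg\max_{c\in\mathcal{Y}}P(Y=c\mid\mathbf{X}=\mathbf{x})$, whose risk with respect to the true label is $R(B_{Q_{\mathrm{opt}}})=\mathbb{E}_{\mathbf{X}}\big[1-\max_{j}P(Y=j\mid\mathbf{X})\big]$. $\hat Y$ is an imperfect (noisy) version of the label $Y$. *)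

From HB Require Import structures.
From mathcomp Require Import all_boot all_order all_algebra.
Set Implicit Arguments. Unset Strict Implicit. Unset Printing Implicit Defensive.
Import Order.TTheory GRing.Theory Num.Theory.
Local Open Scope ring_scope.

(* An expectation operator on a (bounded-)measurable class of real functions:
   [meas] plays the role of "bounded measurable functions" and [E] of the
   integral w.r.t. a probability measure.  Every genuine probability space
   (with meas = bounded measurable functions) satisfies these axioms. *)
Definition is_expectation (T : Type) (R : realFieldType)
  (meas : (T -> R) -> Prop) (E : (T -> R) -> R) : Prop :=
  (forall c : R, meas (fun _ => c)) /\
  (forall f g, meas f -> meas g -> meas (fun x => f x + g x)) /\
  (forall f g, meas f -> meas g -> meas (fun x => f x * g x)) /\
  (forall f g, meas f -> meas g -> meas (fun x => Num.max (f x) (g x))) /\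
  (forall f, meas f -> meas (fun x => if 0 < f x then 1 else 0)) /\
  (forall (a : R) f g, meas f -> meas g ->
       E (fun x => a * f x + g x) = a * E f + E g) /\
  (forall f g, meas f -> meas g -> (forall x, f x <= g x) -> E f <= E g) /\
  E (fun _ => 1) = 1.

Section Defs.
Variables (R : realFieldType) (K : nat) (T H : Type).

Definition vote (EQ : (H -> R) -> R) (cls : H -> T -> 'I_K) (x : T) (c : 'I_K) : R :=
  EQ (fun h => if cls h x == c then 1 else 0).

(* margin M_Q(x,y) = v_Q(x,y) - max_{c <> y} v_Q(x,c)  (votes are >= 0, K >= 2) *)
Definition margin EQ cls (x : T) (y : 'I_K) : R :=
  vote EQ cls x y - \big[Num.max/0]_(c | c != y) vote EQ cls x c.

Definition noisy_post (p : 'I_K -> 'I_K -> R) (eta : T -> 'I_K -> R) (x : T) (i : 'I_K) : R :=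
  \sum_(j < K) p i j * eta x j.

(* mu_1 = E[Mhat] = E_X[ sum_i P(Yhat=i|X) M_Q(X,i) ] *)
Definition mu1 (E : (T -> R) -> R) p eta EQ cls : R :=
  E (fun x => \sum_(i < K) noisy_post p eta x i * margin EQ cls x i).

(* mu_2 = E[Mhat^2] = E_X[ sum_i P(Yhat=i|X) M_Q(X,i)^2 ] *)
Definition mu2 (E : (T -> R) -> R) p eta EQ cls : R :=
  E (fun x => \sum_(i < K) noisy_post p eta x i * (margin EQ cls x i) ^+ 2).

Definition gamma (p : 'I_K -> 'I_K -> R) : R :=
  \sum_(j < K) \big[Num.max/0]_(i < K) p i j.

(* R(B_{Q_opt}) = E_X[ 1 - max_j P(Y=j|X) ] *)
Definition risk_opt (E : (T -> R) -> R) (eta : T -> 'I_K -> R) : R :=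
  E (fun x => 1 - \big[Num.max/0]_(j < K) eta x j).

End Defs.

From HB Require Import structures.
From mathcomp Require Import all_boot all_order all_algebra.
From mathcomp Require Import ring lra.
From Stdlib Require Import FunctionalExtensionality.
Import Order.TTheory GRing.Theory Num.Theory.
Local Open Scope ring_scope.

(* For l > 0 the pointwise inequality 2 l M <= l^2 M^2 + 1[M > 0], averaged
   against P(Yhat = . | X) and then over X, gives
   2 l mu1 <= l^2 mu2 + P(Mhat > 0); choosing l = mu1 / mu2 yields
   mu1^2 / mu2 <= P(Mhat > 0), a Cauchy-Schwarz bound that needs no square
   root.  Since at most one class has a positive margin,
   P(Mhat > 0 | X) <= max_i P(Yhat = i | X) <= gamma max_j P(Y = j | X),
   and E_X[max_j P(Y = j | X)] = 1 - R(B_Qopt). *)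

Set Implicit Arguments.
Unset Strict Implicit.

Lemma closed_big_fun (T R : Type) (S : (T -> R) -> Prop)
    (op : R -> R -> R) (idx : R) (I : Type) (r : seq I) (P : pred I)
    (F : I -> T -> R) :
  S (fun _ => idx) ->
  (forall f g, S f -> S g -> S (fun x => op (f x) (g x))) ->
  (forall i, S (F i)) ->
  S (fun x => \big[op/idx]_(i <- r | P i) F i x).
Proof.
move=> S_idx S_op S_F; elim: r => [|i r IHr].
  by rewrite (_ : (fun x => _) = fun _ => idx) //;
    apply: functional_extensionality => x; rewrite big_nil.
rewrite (_ : (fun x => _) = fun x =>
    if P i then op (F i x) (\big[op/idx]_(j <- r | P j) F j x)
    else \big[op/idx]_(j <- r | P j) F j x); last first.
  by apply: functional_extensionality => x; rewrite big_cons.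
by case: (P i) => //; apply: S_op.
Qed.

Section Expectation.
Variables (T : Type) (R : realFieldType).
Variables (meas : (T -> R) -> Prop) (E : (T -> R) -> R).
Hypothesis hE : is_expectation meas E.

Lemma meas_cst c : meas (fun _ => c).
Proof. by case: hE. Qed.

Lemma meas_add f g : meas f -> meas g -> meas (fun x => f x + g x).
Proof. by case: hE => _ [h _]; exact: h. Qed.

Lemma meas_mul f g : meas f -> meas g -> meas (fun x => f x * g x).
Proof. by case: hE => _ [_ [h _]]; exact: h. Qed.

Lemma meas_opp f : meas f -> meas (fun x => - f x).
Proof.
move=> mf; rewrite (_ : (fun x => _) = fun x => -1 * f x).
  exact: meas_mul (meas_cst _) mf.
by apply: functional_extensionality => x; rewrite mulN1r.
Qed.

Lemma meas_exp f n : meas f -> meas (fun x => f x ^+ n).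
Proof.
move=> mf; elim: n => [|n IHn]; first exact: meas_cst.
rewrite (_ : (fun x => _) = fun x => f x * f x ^+ n); first exact: meas_mul.
by apply: functional_extensionality => x; rewrite exprS.
Qed.

Lemma meas_sum I (r : seq I) (P : pred I) (F : I -> T -> R) :
  (forall i, meas (F i)) -> meas (fun x => \sum_(i <- r | P i) F i x).
Proof.
by apply: closed_big_fun => //; [exact: meas_cst | exact: meas_add].
Qed.

Lemma meas_bigmax I (r : seq I) (P : pred I) (F : I -> T -> R) :
  (forall i, meas (F i)) -> meas (fun x => \big[Num.max/0]_(i <- r | P i) F i x).
Proof.
case: hE => _ [_ [_ [meas_max _]]]; apply: closed_big_fun => //; exact: meas_cst.
Qed.

Lemma ler_E f g : meas f -> meas g -> (forall x, f x <= g x) -> E f <= E g.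
Proof. by case: hE => _ [_ [_ [_ [_ [_ [h _]]]]]]; exact: h. Qed.

Lemma E_cst1 : E (fun _ => 1) = 1.
Proof. by case: hE => _ [_ [_ [_ [_ [_ [_ ->]]]]]]. Qed.

Lemma E_affine a f g : meas f -> meas g ->
  E (fun x => a * f x + g x) = a * E f + E g.
Proof. by case: hE => _ [_ [_ [_ [_ [h _]]]]]; exact: h. Qed.

Lemma E_cst0 : E (fun _ => 0) = 0.
Proof.
have := E_affine 1 (meas_cst 0) (meas_cst 0).
rewrite (_ : (fun x => _) = fun _ => 0); last first.
  by apply: functional_extensionality => x; rewrite mulr0 addr0.
by rewrite mul1r; lra.
Qed.

Lemma E_scale a f : meas f -> E (fun x => a * f x) = a * E f.
Proof.
move=> mf; have := E_affine a mf (meas_cst 0).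
rewrite E_cst0 addr0 => <-; congr E.
by apply: functional_extensionality => x; rewrite addr0.
Qed.

Lemma E_linear a b f g : meas f -> meas g ->
  E (fun x => a * f x + b * g x) = a * E f + b * E g.
Proof.
by move=> mf mg; rewrite E_affine ?E_scale //; exact: meas_mul (meas_cst b) mg.
Qed.

Lemma E_ge0 f : meas f -> (forall x, 0 <= f x) -> 0 <= E f.
Proof. by move=> mf f_ge0; rewrite -E_cst0; apply: ler_E => //; exact: meas_cst. Qed.

End Expectation.

Lemma margin_pos_uniq (R : realFieldType) (K : nat) (T H : Type)
    (EQ : (H -> R) -> R) (cls : H -> T -> 'I_K) x i k :
  i != k -> 0 < margin EQ cls x i -> margin EQ cls x k <= 0.
Proof.
move=> neq_ik; rewrite /margin.
have : vote EQ cls x k <= \big[Num.max/0]_(c | c != i) vote EQ cls x c.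
  by apply: le_bigmax_cond; rewrite eq_sym.
have : vote EQ cls x i <= \big[Num.max/0]_(c | c != k) vote EQ cls x c.
  exact: le_bigmax_cond.
lra.
Qed.

Lemma sum_pos_weights_le_bigmax (R : realFieldType) (K : nat) (q M : 'I_K -> R) :
  (forall i, 0 <= q i) -> (forall i k, i != k -> 0 < M i -> M k <= 0) ->
  \sum_(i < K) (if 0 < M i then q i else 0) <= \big[Num.max/0]_(i < K) q i.
Proof.
move=> q_ge0 M_uniq; have [/existsP[k Mk_gt0]|no_pos] := boolP [exists k, 0 < M k].
  rewrite (bigD1 k) //= Mk_gt0 big1 ?addr0; first exact: le_bigmax.
  move=> i neq_ik; have := M_uniq k i; rewrite eq_sym neq_ik => /(_ isT Mk_gt0).
  by rewrite leNgt => /negPf ->.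
rewrite big1; first exact: bigmax_ge_id.
by move=> i _; case: ifP => // Mi_gt0; case/negP: no_pos; apply/existsP; exists i.
Qed.

Lemma mul_le_sqr_add_pos_weight (R : realFieldType) (l q M : R) :
  0 < l -> 0 <= q ->
  2 * l * (q * M) <= l ^+ 2 * (q * M ^+ 2) + (if 0 < M then q else 0).
Proof.
move=> l_gt0 q_ge0; rewrite -subr_ge0; case: ifP => [_|/negbT].
  have -> : l ^+ 2 * (q * M ^+ 2) + q - 2 * l * (q * M) = q * (l * M - 1) ^+ 2.
    by ring.
  by rewrite mulr_ge0 ?sqr_ge0.
rewrite -leNgt addr0 => M_le0.
have -> : l ^+ 2 * (q * M ^+ 2) - 2 * l * (q * M) = l * q * (l * M ^+ 2 - 2 * M).
  by ring.
have lq_ge0 : 0 <= l * q := mulr_ge0 (ltW l_gt0) q_ge0.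
by rewrite mulr_ge0 // subr_ge0; nra.
Qed.

Lemma bigmax_noisy_post_le (R : realFieldType) (K : nat) (T : Type)
    (p : 'I_K -> 'I_K -> R) (eta : T -> 'I_K -> R) x :
  (forall i j, 0 <= p i j) -> (forall j, 0 <= eta x j) ->
  \big[Num.max/0]_(i < K) noisy_post p eta x i
    <= gamma p * \big[Num.max/0]_(j < K) eta x j.
Proof.
move=> p_ge0 eta_ge0; apply: bigmax_le => [|i _].
  by rewrite mulr_ge0 ?bigmax_ge_id ?sumr_ge0 // => j _; exact: bigmax_ge_id.
rewrite /noisy_post /gamma mulr_suml; apply: ler_sum => j _.
apply: ler_pM => //; first exact: le_bigmax.
exact: (le_bigmax _ (eta x)).
Qed.

Lemma sqr_div_le_of_quadratic_bound (R : realFieldType) (a b c : R) :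
  0 < a -> (forall l, 0 < l -> 2 * l * a <= l ^+ 2 * b + c) -> a ^+ 2 / b <= c.
Proof.
move=> a_gt0 bound; have a_neq0 : a != 0 by rewrite gt_eqF.
have [b_le0|b_gt0] := leP b 0.
  (* for l = (|c| + 1) / a the bound gives 2 (|c| + 1) <= c *)
  have l_gt0 : 0 < (`|c| + 1) / a by rewrite divr_gt0 // ltr_wpDl ?normr_ge0 ?ltr01.
  have := bound _ l_gt0; rewrite -mulrA mulfVK //.
  have : ((`|c| + 1) / a) ^+ 2 * b <= 0 by rewrite mulr_ge0_le0 ?sqr_ge0.
  have := ler_norm c; have := normr_ge0 c; lra.
have := bound (a / b); rewrite divr_gt0 // => /(_ isT).
have -> : 2 * (a / b) * a = 2 * (a ^+ 2 / b) by field; rewrite gt_eqF.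
have -> : (a / b) ^+ 2 * b = a ^+ 2 / b by field; rewrite gt_eqF.
lra.
Qed.

Lemma le_invM_of_le_mul (R : realFieldType) (g z e : R) :
  0 <= g -> 0 <= e -> z <= g * e -> g^-1 * z <= e.
Proof.
rewrite le_eqVlt => /orP[/eqP <-|g_gt0] e_ge0; first by rewrite invr0 !mul0r.
by rewrite ler_pdivrMl.
Qed.

Section NoisyMargin.
Variables (R : realFieldType) (K : nat) (T H : Type).
Variables (measX : (T -> R) -> Prop) (E : (T -> R) -> R).
Variables (EQ : (H -> R) -> R) (cls : H -> T -> 'I_K).
Variables (p : 'I_K -> 'I_K -> R) (eta : T -> 'I_K -> R).
Hypothesis hE : is_expectation measX E.
Hypothesis meas_vote : forall c, measX (fun x => vote EQ cls x c).
Hypothesis meas_eta : forall j, measX (fun x => eta x j).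
Hypothesis p_ge0 : forall i j, 0 <= p i j.
Hypothesis eta_ge0 : forall x j, 0 <= eta x j.

Let q := noisy_post p eta.
Let M := margin EQ cls.
Let eta_max x := \big[Num.max/0]_(j < K) eta x j.

Lemma noisy_post_ge0 x i : 0 <= q x i.
Proof. by apply: sumr_ge0 => j _; rewrite mulr_ge0. Qed.

Lemma meas_noisy_post i : measX (fun x => q x i).
Proof.
apply: (meas_sum hE) => j.
exact: (meas_mul hE (meas_cst hE (p i j)) (meas_eta j)).
Qed.

Lemma meas_margin i : measX (fun x => M x i).
Proof.
apply: (meas_add hE (meas_vote i)); apply: (meas_opp hE).
exact: (meas_bigmax hE).
Qed.

Lemma meas_eta_max : measX eta_max.
Proof. exact: (meas_bigmax hE _ _ meas_eta). Qed.

Lemma margin_moments_pointwise l x : 0 < l ->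
  2 * l * (\sum_(i < K) q x i * M x i)
    <= l ^+ 2 * (\sum_(i < K) q x i * M x i ^+ 2) + gamma p * eta_max x.
Proof.
move=> l_gt0; rewrite !mulr_sumr.
apply: le_trans (_ : \sum_(i < K) (l ^+ 2 * (q x i * M x i ^+ 2)
                    + (if 0 < M x i then q x i else 0)) <= _).
  by apply: ler_sum => i _; apply: mul_le_sqr_add_pos_weight (noisy_post_ge0 x i).
rewrite big_split lerD2l /=.
apply: le_trans (bigmax_noisy_post_le p_ge0 (eta_ge0 x)).
exact: sum_pos_weights_le_bigmax (noisy_post_ge0 x) (@margin_pos_uniq _ _ _ _ EQ cls x).
Qed.

Lemma mu1_moments_bound l : 0 < l ->
  2 * l * mu1 E p eta EQ cls <= l ^+ 2 * mu2 E p eta EQ cls + gamma p * E eta_max.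
Proof.
move=> l_gt0; have meas_q_margin n : measX (fun x => \sum_(i < K) q x i * M x i ^+ n).
  apply: (meas_sum hE) => i.
  exact: (meas_mul hE (meas_noisy_post i) (meas_exp hE n (meas_margin i))).
have meas_A := meas_q_margin 1%N; have meas_B := meas_q_margin 2%N.
rewrite /mu1 /mu2 -(E_scale hE (2 * l) meas_A).
rewrite -(E_linear hE (l ^+ 2) (gamma p) meas_B meas_eta_max).
apply: (ler_E hE); last by move=> x; exact: margin_moments_pointwise.
- exact: (meas_mul hE (meas_cst hE _) meas_A).
- apply: (meas_add hE).
    exact: (meas_mul hE (meas_cst hE _) meas_B).
  exact: (meas_mul hE (meas_cst hE _) meas_eta_max).
Qed.

Lemma risk_opt_E_max : risk_opt E eta = 1 - E eta_max.
Proof.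
rewrite /risk_opt (_ : (fun x => _) = fun x => 1 * 1 + (-1) * eta_max x).
  by rewrite (E_linear hE _ _ (meas_cst hE 1) meas_eta_max) (E_cst1 hE) mul1r mulN1r.
by apply: functional_extensionality => x; rewrite mul1r mulN1r.
Qed.

End NoisyMargin.

Theorem theorem2 (R : realFieldType) (K : nat) (T H : Type)
  (measX : (T -> R) -> Prop) (E : (T -> R) -> R)
  (measQ : (H -> R) -> Prop) (EQ : (H -> R) -> R)
  (cls : H -> T -> 'I_K)
  (p : 'I_K -> 'I_K -> R) (eta : T -> 'I_K -> R) :
  (1 < K)%N ->
  is_expectation measX E ->
  is_expectation measQ EQ ->
  (forall (x : T) (c : 'I_K), measQ (fun h => if cls h x == c then 1 else 0)) ->
  (forall c : 'I_K, measX (fun x => vote EQ cls x c)) ->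
  (forall i j, 0 <= p i j) ->
  (forall j, \sum_(i < K) p i j = 1) ->
  (forall x j, 0 <= eta x j) ->
  (forall x, \sum_(j < K) eta x j = 1) ->
  (forall j, measX (fun x => eta x j)) ->
  0 < mu1 E p eta EQ cls ->
  risk_opt E eta <=
    1 - (gamma p)^-1 * ((mu1 E p eta EQ cls) ^+ 2 / mu2 E p eta EQ cls).
Proof.
move=> _ hE _ _ meas_vote p_ge0 _ eta_ge0 _ meas_eta mu1_gt0.
rewrite (risk_opt_E_max hE meas_eta) lerD2l lerN2.
apply: le_invM_of_le_mul.
- by apply: sumr_ge0 => j _; exact: bigmax_ge_id.
- by apply: (E_ge0 hE (meas_eta_max hE meas_eta)) => x; exact: bigmax_ge_id.
apply: sqr_div_le_of_quadratic_bound mu1_gt0 _ => l.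
exact: (mu1_moments_bound hE meas_vote meas_eta p_ge0 eta_ge0).
Qed.
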